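(* Let $\Xi$ be an orthogonally invariant FQ operation with circular-basis coefficients $\tilde p^{[s]}_{i_1,\dots,i_r}$ ($s=0$ scalar, $s\in\{1,2\}$ vectorial components, $s=12$ pseudoscalar). For a word $w$ over $\{1,2\}$ let $\mathrm{red}\,w$ be its shortest reduction under the rules $11=\lambda$, $22=\lambda$ ($\lambda$ the empty word). Let $\iota=(i_1,\dots,i_r)$ with all $i_j\in\{1,2\}$. If $\mathrm{red}\,\iota\notin\{\lambda,(2)\}$, and moreover either $s\in\{0,12\}$ or $\mathrm{red}\,\iota\notin\{(1),(2,1)\}$, then $\tilde p^{[s]}_{i_1,\dots,i_r}=0$.
   Context: Setting. $(Q_1,Q_2)$ is a Clifford system: $Q_1^2=Q_2^2=-1$, $Q_1Q_2=-Q_2Q_1$. $R_1,R_2$ are formal noncommuting infinitesimal variables; one works in the real algebra generated by $Q_1,Q_2,R_1,R_2$ (free apart from the Clifford relations), completed with respect to total degree in $R_1,R_2$, or in extensions of it by further formal infinitesimal elements. Put $A_i=Q_i+R_i$. For $Q$ with $Q^2=-1$ and any $X$ put $X^0_Q=\frac12(X+Q^{-1}XQ)$, $X^1_Q=\frac12(X-Q^{-1}XQ)$. The split variables are $r_1,\dots,r_8$: for $j\in\{1,2\}$, $\iota_1,\iota_2\in\{0,1\}$, $r_{4(j-1)+2\iota_1+\iota_2+1}=((R_jQ_j^{-1})^{\iota_1}_{Q_1})^{\iota_2}_{Q_2}$. An FQ operation around $(Q_1,Q_2)$ is given by formal real noncommutative power series in eight variables: scalar $\Xi(A_1,A_2)=f_0(r_1,\dots,r_8)$,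 vectorial $\Xi(A_1,A_2)=(f_1(r)Q_1,f_2(r)Q_2)$, pseudoscalar $\Xi(A_1,A_2)=f_{12}(r)Q_1Q_2$; the operation is identified with this family of series. The same series can be evaluated relative to any other Clifford system $(Q_1',Q_2')$ at $(A_1',A_2')$ with $A'_i-Q'_i$ infinitesimal, by forming the split variables of $A_i'-Q_i'$ relative to $(Q'_1,Q'_2)$ and multiplying by $Q'_s$. Mixed basis: $\hat r_1=\frac12(r_2-r_7)$, $\hat r_2=\frac12(r_2+r_7)$, $\hat r_3=\frac12(r_1+r_5)$, $\hat r_4=\frac12(r_1-r_5)$, $\hat r_5=\frac12(r_4-r_8)$, $\hat r_6=\frac12(r_4+r_8)$, $\hat r_7=\frac12(r_3+r_6)$, $\hat r_8=\frac12(r_3-r_6)$. Circular basis: $\tilde r_i=\hat r_i$ for $i\notin\{4,5\}$, $\tilde r_4=\hat r_4+\hat r_5$, $\tilde r_5=\hat r_4-\hat r_5$. Rewriting $f_s$ as a power series in $\tilde r_1,\dots,\tilde r_8$, $\tilde p^{[s]}_{i_1,\dots,i_r}$ is the coefficient of $\tilde r_{i_1}\cdots\tilde r_{i_r}$. Orthogonal invariance: let $t$ be a central formal variable with $t^2=0$ and $\mathrm{Rot}_t(B_1,B_2)=(B_1+tB_2,\,B_2-tB_1)$. A (pseudo)scalar $\Xi$ is orthogonally invariant if $\Xi_{(Q_1,Q_2)}(A_1,A_2)=\Xi_{\mathrm{Rot}_t(Q_1,Q_2)}(\mathrm{Rot}_t(A_1,A_2))$; a vectorial $\Xi$ is orthogonally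 invariant if $\mathrm{Rot}_t(\Xi_{(Q_1,Q_2)}(A_1,A_2))=\Xi_{\mathrm{Rot}_t(Q_1,Q_2)}(\mathrm{Rot}_t(A_1,A_2))$; the subscript indicates the base Clifford system relative to which the series is evaluated. *)

(* FQ operations around a Clifford system (Q1,Q2), modelled
   concretely in the completed free real algebra generated by Q1,Q2,R1,R2
   subject only to the Clifford relations, extended by a central t, t^2 = 0. *)
From HB Require Import structures.
From mathcomp Require Import all_boot all_order all_algebra.
Set Implicit Arguments. Unset Strict Implicit. Unset Printing Implicit Defensive.
Import Order.TTheory GRing.Theory Num.Theory.
Local Open Scope ring_scope.

Section FQ.
Variable R : realFieldType.

(* ---------- The algebra <Q1,Q2,R1,R2 | Clifford>, completed in R-degree ----
   Normal form: every element is a (possibly infinite) formal sum of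
   e_{b0} R_{w0} e_{b1} R_{w1} ... R_{w(n-1)} e_{bn}, with e_a in the Clifford
   basis e_0 = 1, e_1 = Q1, e_2 = Q2, e_3 = Q1 Q2 (indices 'I_4), and R_0 = R1,
   R_1 = R2 (indices 'I_2).  An element is its coefficient function; only the
   well-formed indices (size b = size w + 1) are meaningful. *)
Definition alg := seq 'I_2 -> seq 'I_4 -> R.
Definition wf (w : seq 'I_2) (b : seq 'I_4) : Prop := size b = (size w).+1.
Definition aeq (x y : alg) : Prop := forall w b, wf w b -> x w b = y w b.

(* Clifford multiplication table: e_a e_b = cl_sign a b * e_(a xor b). *)
Definition cl_neg (a b : nat) : bool :=
  (a, b) \in [:: (1, 1); (2, 2); (3, 3); (1, 3); (3, 2); (2, 1)]%N.
Definition cl_sign (a b : 'I_4) : R := if cl_neg a b then -1 else 1.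
Definition cmul (a b c : 'I_4) : R :=
  if Nat.lxor a b == nat_of_ord c then cl_sign a b else 0.

Definition azero : alg := fun _ _ => 0.
Definition aadd (x y : alg) : alg := fun w b => x w b + y w b.
Definition ascale (c : R) (x : alg) : alg := fun w b => c * x w b.
Definition acl (a : 'I_4) : alg :=
  fun w b => if (w == [::]) && (b == [:: a]) then 1 else 0.
Definition aR (j : 'I_2) : alg :=
  fun w b => if (w == [:: j]) && (b == [:: ord0; ord0]) then 1 else 0.
Definition amul (x y : alg) : alg := fun w b =>
  \sum_(k < (size w).+1) \sum_(a : 'I_4) \sum_(c : 'I_4)
     x (take k w) (rcons (take k b) a) * y (drop k w) (c :: drop k.+1 b)
     * cmul a c (nth ord0 b k).

(* ---------- extension by a central t with t^2 = 0: pairs x + t y ---------- *)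
Definition dual := (alg * alg)%type.
Definition deq (x y : dual) : Prop := aeq x.1 y.1 /\ aeq x.2 y.2.
Definition demb (x : alg) : dual := (x, azero).
Definition dadd (x y : dual) : dual := (aadd x.1 y.1, aadd x.2 y.2).
Definition dscale (c : R) (x : dual) : dual := (ascale c x.1, ascale c x.2).
Definition dopp (x : dual) : dual := dscale (-1) x.
Definition dsub (x y : dual) : dual := dadd x (dopp y).
Definition dmul (x y : dual) : dual :=
  (amul x.1 y.1, aadd (amul x.1 y.2) (amul x.2 y.1)).
Definition done : dual := demb (acl ord0).
Definition dt : dual := (azero, acl ord0).

(* For Q with Q^2 = -1 (true for every Clifford system used below) Q^-1 = -Q. *)
Definition dinvQ (Q : dual) : dual := dopp Q.
Definition dpart (i : bool) (Q X : dual) : dual :=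
  dscale (1 / 2) (dadd X (dscale (if i then -1 else 1) (dmul (dmul (dinvQ Q) X) Q))).
(* split variable r_(k+1) (k : 'I_8 is 0-based):
   k = 4(j-1) + 2 iota1 + iota2,  r = ((R_j Q_j^-1)^iota1_Q1)^iota2_Q2,
   where R_j = A_j - Q_j. *)
Definition split_var (Q1 Q2 A1 A2 : dual) (k : 'I_8) : dual :=
  let j := (k %/ 4)%N in
  let i1 := odd (k %/ 2) in
  let i2 := odd k in
  let Qj := if j == 0%N then Q1 else Q2 in
  let Aj := if j == 0%N then A1 else A2 in
  dpart i2 Q2 (dpart i1 Q1 (dmul (dsub Aj Qj) (dinvQ Qj))).

(* f u = coefficient of the monomial r_(u1) ... r_(ur) *)
Definition series := seq 'I_8 -> R.
Definition dprod (s : seq dual) : dual := foldr dmul done s.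
(* Evaluation at infinitesimal arguments (all of R-degree >= 1): the
   component of R-degree n only receives contributions of monomials of
   length <= n, so the formal sum is a finite sum at each index. *)
Definition eval (f : series) (y : 'I_8 -> dual) : dual :=
  ((fun w b => \sum_(k < (size w).+1) \sum_(u : k.-tuple 'I_8)
                 f u * (dprod (map y u)).1 w b),
   (fun w b => \sum_(k < (size w).+1) \sum_(u : k.-tuple 'I_8)
                 f u * (dprod (map y u)).2 w b)).

Inductive FQop :=
  | FQscalar of series
  | FQvector of series & series
  | FQpseudo of series.

Inductive FQidx := I0 | I1 | I2 | I12.

Definition component (op : FQop) (s : FQidx) : option series :=
  match op, s with
  | FQscalar f, I0 => Some f
  | FQvector f _, I1 => Some f
  | FQvector _ g, I2 => Some g
  | FQpseudo f, I12 => Some f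
  | _, _ => None
  end.

Definition e1 : 'I_4 := @Ordinal 4 1 isT.
Definition e2 : 'I_4 := @Ordinal 4 2 isT.

Definition bQ1 : dual := demb (acl e1).
Definition bQ2 : dual := demb (acl e2).
Definition bA1 : dual := dadd bQ1 (demb (aR ord0)).
Definition bA2 : dual := dadd bQ2 (demb (aR ord_max)).

Definition rot1 (B1 B2 : dual) : dual := dadd B1 (dmul dt B2).
Definition rot2 (B1 B2 : dual) : dual := dsub B2 (dmul dt B1).

(* Value of the operation relative to the Clifford system (Q1,Q2) at (A1,A2);
   the result is a pair (second component unused for (pseudo)scalars). *)
Definition Xi (op : FQop) (Q1 Q2 A1 A2 : dual) : dual * dual :=
  let r := split_var Q1 Q2 A1 A2 in
  match op with
  | FQscalar f => (eval f r, eval f r)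
  | FQvector f1 f2 => (dmul (eval f1 r) Q1, dmul (eval f2 r) Q2)
  | FQpseudo f => (dmul (dmul (eval f r) Q1) Q2, dmul (dmul (eval f r) Q1) Q2)
  end.

Definition ortho_inv (op : FQop) : Prop :=
  let Q1' := rot1 bQ1 bQ2 in let Q2' := rot2 bQ1 bQ2 in
  let A1' := rot1 bA1 bA2 in let A2' := rot2 bA1 bA2 in
  let X := Xi op bQ1 bQ2 bA1 bA2 in
  let X' := Xi op Q1' Q2' A1' A2' in
  match op with
  | FQvector _ _ => deq (rot1 X.1 X.2) X'.1 /\ deq (rot2 X.1 X.2) X'.2
  | _ => deq X.1 X'.1
  end.

Definition mat8 (tbl : seq (seq R)) (i j : 'I_8) : R := nth 0 (nth [::] tbl i) j.
(* r_i in terms of hat r (inverse of the paper's definition of hat r):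
   r1 = h3+h4, r2 = h1+h2, r3 = h7+h8, r4 = h5+h6,
   r5 = h3-h4, r6 = h7-h8, r7 = h2-h1, r8 = h6-h5 *)
Definition r_of_hat : 'I_8 -> 'I_8 -> R := mat8
  [:: [:: 0; 0; 1; 1; 0; 0; 0; 0];
      [:: 1; 1; 0; 0; 0; 0; 0; 0];
      [:: 0; 0; 0; 0; 0; 0; 1; 1];
      [:: 0; 0; 0; 0; 1; 1; 0; 0];
      [:: 0; 0; 1; -1; 0; 0; 0; 0];
      [:: 0; 0; 0; 0; 0; 0; 1; -1];
      [:: -1; 1; 0; 0; 0; 0; 0; 0];
      [:: 0; 0; 0; 0; -1; 1; 0; 0]].
Definition hat_of_tilde : 'I_8 -> 'I_8 -> R := mat8
  [:: [:: 1; 0; 0; 0; 0; 0; 0; 0];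
      [:: 0; 1; 0; 0; 0; 0; 0; 0];
      [:: 0; 0; 1; 0; 0; 0; 0; 0];
      [:: 0; 0; 0; 1/2; 1/2; 0; 0; 0];
      [:: 0; 0; 0; 1/2; -1/2; 0; 0; 0];
      [:: 0; 0; 0; 0; 0; 1; 0; 0];
      [:: 0; 0; 0; 0; 0; 0; 1; 0];
      [:: 0; 0; 0; 0; 0; 0; 0; 1]].
(* The paper's forward definitions, recorded for reference. *)
Definition hat_of_r : 'I_8 -> 'I_8 -> R := mat8
  [:: [:: 0; 1/2; 0; 0; 0; 0; -1/2; 0];
      [:: 0; 1/2; 0; 0; 0; 0; 1/2; 0];
      [:: 1/2; 0; 0; 0; 1/2; 0; 0; 0];
      [:: 1/2; 0; 0; 0; -1/2; 0; 0; 0];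
      [:: 0; 0; 0; 1/2; 0; 0; 0; -1/2];
      [:: 0; 0; 0; 1/2; 0; 0; 0; 1/2];
      [:: 0; 0; 1/2; 0; 0; 1/2; 0; 0];
      [:: 0; 0; 1/2; 0; 0; -1/2; 0; 0]].
Definition tilde_of_hat : 'I_8 -> 'I_8 -> R := mat8
  [:: [:: 1; 0; 0; 0; 0; 0; 0; 0];
      [:: 0; 1; 0; 0; 0; 0; 0; 0];
      [:: 0; 0; 1; 0; 0; 0; 0; 0];
      [:: 0; 0; 0; 1; 1; 0; 0; 0];
      [:: 0; 0; 0; 1; -1; 0; 0; 0];
      [:: 0; 0; 0; 0; 0; 1; 0; 0];
      [:: 0; 0; 0; 0; 0; 0; 1; 0];
      [:: 0; 0; 0; 0; 0; 0; 0; 1]].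

Definition r_of_tilde (i k : 'I_8) : R :=
  \sum_(j : 'I_8) r_of_hat i j * hat_of_tilde j k.

(* coefficient of tilde r_(v1) ... tilde r_(vr) after substituting
   r_i = sum_k r_of_tilde i k * tilde r_k into f *)
Definition ptilde (f : series) (v : seq 'I_8) : R :=
  \sum_(u : (size v).-tuple 'I_8)
     f u * \prod_(j < size v) r_of_tilde (tnth u j) (nth ord0 v j).

End FQ.

Definition red_step (a : 'I_2) (acc : seq 'I_2) : seq 'I_2 :=
  if acc is b :: t then (if a == b then t else a :: acc) else [:: a].
Definition red (w : seq 'I_2) : seq 'I_2 := foldr red_step [::] w.

Definition letter1 : 'I_2 := ord0.
Definition letter2 : 'I_2 := ord_max.
(* letter i in {1,2} indexes tilde r_i *)
Definition letter8 (i : 'I_2) : 'I_8 := widen_ord (isT : (2 <= 8)%N) i.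

(* Letting R1, R2 commute with Q1, Q2 is an algebra morphism onto power series
   in R1, R2 whose coefficients lie in the quaternion algebra of (Q1, Q2),
   realised by 4 x 4 matrices.  Modulo R-degree two the split variables become
   linear and are computed exactly over Q: only r_2 and r_7 survive, as -Q1 R1
   and -Q2 R2, and relative to the rotated system they acquire t-terms
   proportional to Q2 R1 and Q1 R2.  A linear functional pairing the R-words of
   length r with the letters of iota recovers the coefficient p of
   tilde r_(i_1) ... tilde r_(i_r) from the t-free part of the evaluated series,
   and c p Q1Q2 from its t-part, where the integer c depends only on red iota:
   on an alternating word it is +-2 times the number of letters 1.
   Orthogonal invariance read off in the t-part gives c p = 0 for
   (pseudo)scalars, and p2 = (1 + c) p1, p1 = (1 + c) p2 for vectorial
   operations.  Now c <> 0 unless red iota is empty or (2), and c <> -2 unless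
   moreover red iota is (1) or (2,1). *)

From HB Require Import structures.
From mathcomp Require Import all_boot all_order all_algebra.
From mathcomp Require Import ring lra zify.
Import GRing.Theory Num.Theory.
Local Open Scope ring_scope.
Set Implicit Arguments. Unset Strict Implicit. Unset Printing Implicit Defensive.

Lemma ord2_cases (P : 'I_2 -> Prop) : P ord0 -> P ord_max -> forall i, P i.
Proof.
move=> P0 P1 [[|[|m]] Hm] //.
- by rewrite (_ : Ordinal Hm = ord0) //; apply: val_inj.
- by rewrite (_ : Ordinal Hm = ord_max) //; apply: val_inj.
Qed.

Lemma ord4_cases (P : 'I_4 -> Prop) :
  P (@Ordinal 4 0 isT) -> P (@Ordinal 4 1 isT) -> P (@Ordinal 4 2 isT) ->
  P (@Ordinal 4 3 isT) -> forall i, P i.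
Proof.
move=> P0 P1 P2 P3 [m Hm].
by do 4 (case: m Hm => [|m] Hm; first by rewrite (bool_irrelevance Hm isT)).
Qed.

Lemma ord8_cases (P : 'I_8 -> Prop) :
  P (@Ordinal 8 0 isT) -> P (@Ordinal 8 1 isT) -> P (@Ordinal 8 2 isT) ->
  P (@Ordinal 8 3 isT) -> P (@Ordinal 8 4 isT) -> P (@Ordinal 8 5 isT) ->
  P (@Ordinal 8 6 isT) -> P (@Ordinal 8 7 isT) -> forall i, P i.
Proof.
move=> P0 P1 P2 P3 P4 P5 P6 P7 [m Hm].
by do 8 (case: m Hm => [|m] Hm; first by rewrite (bool_irrelevance Hm isT)).
Qed.

(** * The Clifford algebra of (Q1, Q2) as 4 x 4 matrices *)

Definition e3 : 'I_4 := @Ordinal 4 3 isT.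

Lemma cl_xor_subproof (a c : 'I_4) : (Nat.lxor a c < 4)%N.
Proof. by move: a c; apply: ord4_cases; apply: ord4_cases. Qed.

Definition cl_xor (a c : 'I_4) : 'I_4 := Ordinal (cl_xor_subproof a c).

Section CliffordMatrices.
Variable R : realFieldType.
Local Notation M4 := 'M[R]_4.

Lemma cmulE (a c m : 'I_4) :
  cmul R a c m = if cl_xor a c == m then cl_sign R a c else 0.
Proof. by []. Qed.

Lemma cl_sign_assoc (a c q p : 'I_4) :
  cl_sign R c q * cmul R a (cl_xor c q) p = cl_sign R a c * cmul R (cl_xor a c) q p.
Proof.
rewrite /cmul /cl_sign /=.
move: a c q p; do 4 apply: ord4_cases; rewrite /= ?mulr1 ?mul1r ?mulr0 ?mulrNN //.
all: ring.
Qed.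

Lemma sum_cmul (V : lmodType R) (a c : 'I_4) (F : 'I_4 -> V) :
  \sum_m cmul R a c m *: F m = cl_sign R a c *: F (cl_xor a c).
Proof.
rewrite (bigD1 (cl_xor a c)) //= cmulE eqxx big1 ?addr0 // => m Hm.
by rewrite cmulE eq_sym (negbTE Hm) scale0r.
Qed.

(* Left regular representation: column q of [cl_mx a] holds e_a e_q. *)
Definition cl_mx (a : 'I_4) : M4 := \matrix_(p, q) cmul R a q p.

Lemma cl_mxM a c : cl_mx a *m cl_mx c = cl_sign R a c *: cl_mx (cl_xor a c).
Proof.
apply/matrixP => p q; rewrite !mxE.
transitivity (\sum_m cmul R c q m *: (cmul R a m p : R^o)).
  by apply: eq_bigr => m _; rewrite !mxE mulrC.
by rewrite sum_cmul; exact: cl_sign_assoc.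
Qed.

Lemma cl_mx0 : cl_mx ord0 = 1%:M.
Proof.
apply/matrixP => p q; rewrite !mxE /cmul /cl_sign /=.
by move: p q; apply: ord4_cases; apply: ord4_cases.
Qed.

Definition quat (a b c d : R) : M4 :=
  a *: 1%:M + b *: cl_mx e1 + c *: cl_mx e2 + d *: cl_mx e3.

Ltac quat_entries := apply/matrixP; apply: ord4_cases; apply: ord4_cases;
  rewrite !mxE ?big_ord_recr ?big_ord0 /= ?mxE /cmul /cl_sign /=; ring.

Lemma quatM a b c d a' b' c' d' : quat a b c d *m quat a' b' c' d' =
  quat (a*a' - b*b' - c*c' - d*d') (a*b' + b*a' + c*d' - d*c')
       (a*c' - b*d' + c*a' + d*b') (a*d' + b*c' - c*b' + d*a').
Proof. quat_entries. Qed.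

Lemma quatD a b c d a' b' c' d' :
  quat a b c d + quat a' b' c' d' = quat (a + a') (b + b') (c + c') (d + d').
Proof. quat_entries. Qed.

Lemma quatZ r a b c d : r *: quat a b c d = quat (r * a) (r * b) (r * c) (r * d).
Proof. quat_entries. Qed.

Lemma quatN a b c d : - quat a b c d = quat (- a) (- b) (- c) (- d).
Proof. quat_entries. Qed.

Lemma quat1 : quat 1 0 0 0 = 1%:M.
Proof. quat_entries. Qed.

Lemma quat0 : quat 0 0 0 0 = 0.
Proof. quat_entries. Qed.

Lemma cl_mx_quat a : cl_mx a =
  quat (a == 0%N :> nat)%:R (a == 1%N :> nat)%:R (a == 2%N :> nat)%:R (a == 3%N :> nat)%:R.
Proof. by move: a; apply: ord4_cases; quat_entries. Qed.

Lemma quat_inj a b c d a' b' c' d' : quat a b c d = quat a' b' c' d' ->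
  [/\ a = a', b = b', c = c' & d = d'].
Proof.
move=> E; have col0 p : quat a b c d p ord0 = quat a' b' c' d' p ord0 by rewrite E.
move: (col0 (@Ordinal 4 0 isT)) (col0 (@Ordinal 4 1 isT)).
move: (col0 (@Ordinal 4 2 isT)) (col0 (@Ordinal 4 3 isT)).
rewrite !mxE /cmul /cl_sign /= ?mulr1n ?mulr0n.
by rewrite !(mulr1, mulr0, addr0, add0r) => -> -> -> ->.
Qed.

End CliffordMatrices.

Section WordCoefficients.
Variable R : realFieldType.
Local Notation M4 := 'M[R]_4.

Fixpoint clsum (m : nat) (G : seq 'I_4 -> M4) : M4 :=
  if m is m'.+1 then \sum_a cl_mx R a *m clsum m' (fun b => G (a :: b))
  else G [::].

Lemma eq_clsum m G G' :
  (forall b, size b = m -> G b = G' b) -> clsum m G = clsum m G'.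
Proof.
elim: m G G' => [|m IH] G G' eqG /=; first exact: eqG.
by apply: eq_bigr => a _; congr (_ *m _); apply: IH => b Hb; apply: eqG; rewrite /= Hb.
Qed.

Lemma clsum_sum m (I : Type) (r : seq I) (P : pred I) (F : I -> seq 'I_4 -> M4) :
  clsum m (fun b => \sum_(i <- r | P i) F i b) = \sum_(i <- r | P i) clsum m (F i).
Proof.
elim: m F => [|m IH] F //=.
under eq_bigr => a _ do rewrite IH mulmx_sumr.
by rewrite exchange_big.
Qed.

Lemma clsumZ m c G : clsum m (fun b => c *: G b) = c *: clsum m G.
Proof.
elim: m G => [|m IH] G //=.
by rewrite scaler_sumr; apply: eq_bigr => a _; rewrite IH scalemxAr.
Qed.

Lemma clsumD m G G' : clsum m (fun b => G b + G' b) = clsum m G + clsum m G'.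
Proof.
elim: m G G' => [|m IH] G G' //=.
by rewrite -big_split; apply: eq_bigr => a _; rewrite IH mulmxDr.
Qed.

Lemma clsum_mulmxr m G M : clsum m (fun b => G b *m M) = clsum m G *m M.
Proof.
elim: m G => [|m IH] G //=.
by rewrite mulmx_suml; apply: eq_bigr => a _; rewrite IH mulmxA.
Qed.

Lemma clsum_cat k l G :
  clsum (k + l) G = clsum k (fun b => clsum l (fun b' => G (b ++ b'))).
Proof. by elim: k G => [|k IH] G //=; apply: eq_bigr => a _; rewrite IH. Qed.

Lemma clsum0 m : clsum m (fun _ => 0) = 0.
Proof. by elim: m => //= m IH; rewrite big1 // => a _; rewrite IH mulmx0. Qed.

(* The coefficient of the R-word w in the image of x under the algebra
   morphism that lets R1, R2 commute with Q1, Q2; the Clifford algebra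
   becomes the quaternions, represented by 4 x 4 matrices. *)
Definition wcoef (x : alg R) (w : seq 'I_2) : M4 :=
  clsum (size w).+1 (fun b => x w b *: 1%:M).

Lemma wcoef_aeq x y w : aeq x y -> wcoef x w = wcoef y w.
Proof. by move=> exy; apply: eq_clsum => b Hb; rewrite exy. Qed.

Lemma wcoefD x y w : wcoef (aadd x y) w = wcoef x w + wcoef y w.
Proof. by rewrite /wcoef -clsumD; apply: eq_clsum => b _; rewrite scalerDl. Qed.

Lemma wcoefZ c x w : wcoef (ascale c x) w = c *: wcoef x w.
Proof. by rewrite /wcoef -clsumZ; apply: eq_clsum => b _; rewrite scalerA. Qed.

Lemma wcoef0 w : wcoef (azero R) w = 0.
Proof. by rewrite /wcoef -(clsum0 (size w).+1); apply: eq_clsum => b _; rewrite scale0r. Qed.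

Lemma wcoef_mul_split (x y : alg R) (w : seq 'I_2) (k : nat) : (k <= size w)%N ->
  clsum (size w).+1 (fun b => (\sum_(a : 'I_4) \sum_(c : 'I_4)
     x (take k w) (rcons (take k b) a) * y (drop k w) (c :: drop k.+1 b)
     * cmul R a c (nth ord0 b k)) *: 1%:M)
  = wcoef x (take k w) *m wcoef y (drop k w).
Proof.
move=> le_kw.
have -> : (size w).+1 = (k + (size w - k).+1)%N by rewrite addnS subnKC.
rewrite /wcoef size_takel // size_drop clsum_cat -[k.+1]addn1 clsum_cat -clsum_mulmxr.
apply: eq_clsum => s Hs /=.
set Y := fun c => clsum (size w - k) (fun t => y (drop k w) (c :: t) *: 1%:M).
transitivity (\sum_m cl_mx R m *m
  \sum_a \sum_c (x (take k w) (rcons s a) * cmul R a c m) *: Y c).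
  apply: eq_bigr => m _; congr (_ *m _).
  have Hd t : drop (k + 1) (s ++ m :: t) = t.
    by rewrite -cat_rcons drop_size_cat // size_rcons Hs addn1.
  have Ht t : take k (s ++ m :: t) = s by rewrite take_size_cat.
  have Hn t : nth ord0 (s ++ m :: t) k = m by rewrite nth_cat Hs ltnn subnn.
  under eq_clsum => t _ do rewrite Hd Ht Hn scaler_suml.
  rewrite clsum_sum; apply: eq_bigr => a _.
  under eq_clsum => t _ do rewrite scaler_suml.
  rewrite clsum_sum; apply: eq_bigr => c _.
  rewrite /Y -clsumZ; apply: eq_clsum => t _; rewrite scalerA; congr (_ *: _); ring.
rewrite -/(Y _).
transitivity (\sum_a \sum_c
  x (take k w) (rcons s a) *: (cl_mx R a *m cl_mx R c *m Y c)).
  under eq_bigr => m _ do rewrite mulmx_sumr; rewrite exchange_big.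
  apply: eq_bigr => a _; under eq_bigr => m _ do rewrite mulmx_sumr.
  rewrite exchange_big; apply: eq_bigr => c _.
  rewrite cl_mxM -sum_cmul mulmx_suml scaler_sumr; apply: eq_bigr => m _.
  by rewrite -!scalemxAr !scalemxAl scalerA mulrC.
rewrite mulmx_suml; apply: eq_bigr => a _; rewrite mulmx_sumr; apply: eq_bigr => c _.
by rewrite -scalemxAr mulmx1 cats1 -scalemxAl mulmxA.
Qed.

Lemma wcoefM x y w :
  wcoef (amul x y) w = \sum_(k < (size w).+1) wcoef x (take k w) *m wcoef y (drop k w).
Proof.
rewrite {1}/wcoef /amul.
under eq_clsum => b _ do rewrite scaler_suml.
by rewrite clsum_sum; apply: eq_bigr => k _; rewrite wcoef_mul_split // -ltnS.
Qed.

Definition deg1 (c : M4) (d : 'I_2 -> M4) (w : seq 'I_2) : M4 :=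
  if w is j :: w' then (if w' is [::] then d j else 0) else c.

Lemma eq_deg1 c c' d d' :
  c = c' -> (forall j, d j = d' j) -> forall w, deg1 c d w = deg1 c' d' w.
Proof. by move=> -> eqd [|j [|? ?]] //=. Qed.

Lemma deg1D c c' d d' w : deg1 c d w + deg1 c' d' w = deg1 (c + c') (fun j => d j + d' j) w.
Proof. by case: w => [|j [|? ?]] //=; rewrite addr0. Qed.

Lemma deg1Z r c d w : r *: deg1 c d w = deg1 (r *: c) (fun j => r *: d j) w.
Proof. by case: w => [|j [|? ?]] //=; rewrite scaler0. Qed.

Lemma wcoef_acl a w : wcoef (acl R a) w = deg1 (cl_mx R a) (fun _ => 0) w.
Proof.
rewrite /wcoef; case: w => [|j w].
  rewrite /= (bigD1 a) //= big1 ?addr0; first by rewrite /acl /= eqxx scale1r mulmx1.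
  by move=> c Hc; rewrite /acl /= eqseq_cons andbT (negbTE Hc) scale0r mulmx0.
transitivity (clsum (size (j :: w)).+1 (fun _ => 0 : M4)).
  by apply: eq_clsum => b _; rewrite /acl /= scale0r.
by rewrite clsum0; case: w.
Qed.

Lemma wcoef_aR j w : wcoef (aR R j) w = deg1 0 (fun j' => (j' == j)%:R *: 1%:M) w.
Proof.
rewrite /wcoef; case: w => [|j' [|j'' w]].
- transitivity (clsum 1 (fun _ => 0 : M4)); last by rewrite clsum0.
  by apply: eq_clsum => b _; rewrite /aR /= scale0r.
- rewrite /= (bigD1 ord0) //= [X in _ + X]big1 ?addr0; last first.
    move=> a Ha; rewrite big1 ?mulmx0 // => c _.
    by rewrite /aR /= !eqseq_cons (negbTE Ha) /= andbF scale0r mulmx0.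
  rewrite (bigD1 ord0) //= [X in _ + X]big1 ?addr0; last first.
    by move=> c Hc; rewrite /aR /= !eqseq_cons (negbTE Hc) !andbF scale0r mulmx0.
  by rewrite /aR /= !eqseq_cons !eqxx !andbT cl_mx0 !mul1mx; case: (j' == j).
- transitivity (clsum (size [:: j', j'' & w]).+1 (fun _ => 0 : M4)); last by rewrite clsum0.
  by apply: eq_clsum => b _; rewrite /aR /= eqseq_cons andbF scale0r.
Qed.

Section ConstantFactor.
Variables (z : alg R) (M : M4).
Hypothesis wcoef_z : forall w, wcoef z w = deg1 M (fun _ => 0) w.

Lemma wcoef_mul_constr x w : wcoef (amul x z) w = wcoef x w *m M.
Proof.
rewrite wcoefM big_ord_recr /= wcoef_z take_size drop_size /=.
rewrite big1 ?add0r // => i _; rewrite wcoef_z.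
have : (i < size w)%N := ltn_ord i.
case: (drop i w) (size_drop i w) => [|j [|? ?]] /= Hs Hi.
- by move: Hs => /esym/eqP; rewrite subn_eq0 leqNgt Hi.
- by rewrite mulmx0.
- by rewrite mulmx0.
Qed.

Lemma wcoef_mul_constl x w : wcoef (amul z x) w = M *m wcoef x w.
Proof.
rewrite wcoefM big_ord_recl /= wcoef_z take0 drop0 /=.
rewrite big1 ?addr0 // => i _; rewrite wcoef_z; move: i.
case: w => [|a w] [i Hi] //=.
by rewrite add0n; case: (take i w) => [|? ?] /=; rewrite mul0mx.
Qed.

End ConstantFactor.

Lemma wcoef_mul_deg1l z y (d : 'I_2 -> M4) :
  (forall w, wcoef z w = deg1 0 d w) ->
  forall w, wcoef (amul z y) w = if w is j :: w' then d j *m wcoef y w' else 0.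
Proof.
move=> wcoef_z w; rewrite wcoefM; case: w => [|j w].
  by rewrite big_ord_recl big_ord0 wcoef_z /= mul0mx addr0.
rewrite big_ord_recl wcoef_z /= mul0mx add0r big_ord_recl wcoef_z /=.
case: w => [|x w]; first by rewrite big_ord0 addr0.
by rewrite big1 ?addr0 // => i _; rewrite wcoef_z /= mul0mx.
Qed.

End WordCoefficients.

(** * Split variables modulo R-degree two *)

(* Rational quaternions a + b Q1 + c Q2 + d Q1Q2, so that the images of the
   split variables below are decided by computation. *)
Definition ratq := (rat * rat * rat * rat)%type.
Definition ratq0 : ratq := (0, 0, 0, 0).
Definition ratq_e (a : 'I_4) : ratq :=
  ((a == 0%N :> nat)%:R, (a == 1%N :> nat)%:R, (a == 2%N :> nat)%:R, (a == 3%N :> nat)%:R).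
Definition ratq_add (x y : ratq) : ratq :=
  let: (a, b, c, d) := x in let: (a', b', c', d') := y in
  (a + a', b + b', c + c', d + d').
Definition ratq_scale (r : rat) (x : ratq) : ratq :=
  let: (a, b, c, d) := x in (r * a, r * b, r * c, r * d).
Definition ratq_mul (x y : ratq) : ratq :=
  let: (a, b, c, d) := x in let: (a', b', c', d') := y in
  (a*a' - b*b' - c*c' - d*d', a*b' + b*a' + c*d' - d*c',
   a*c' - b*d' + c*a' + d*b', a*d' + b*c' - c*b' + d*a').

Section RationalQuaternions.
Variable R : realFieldType.

Definition ratq_mx (x : ratq) : 'M[R]_4 :=
  let: (a, b, c, d) := x in quat (ratr a) (ratr b) (ratr c) (ratr d).

Lemma ratq_mxM x y : ratq_mx (ratq_mul x y) = ratq_mx x *m ratq_mx y.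
Proof.
case: x => [[[a b] c] d]; case: y => [[[a' b'] c'] d'].
by rewrite /= quatM !(rmorphD, rmorphB, rmorphN, rmorphM).
Qed.

Lemma ratq_mxD x y : ratq_mx (ratq_add x y) = ratq_mx x + ratq_mx y.
Proof.
case: x => [[[a b] c] d]; case: y => [[[a' b'] c'] d'].
by rewrite /= quatD !rmorphD.
Qed.

Lemma ratq_mxZ r x : ratq_mx (ratq_scale r x) = ratr r *: ratq_mx x.
Proof. by case: x => [[[a b] c] d]; rewrite /= quatZ !rmorphM. Qed.

Lemma ratq_mx0 : ratq_mx ratq0 = 0.
Proof. by rewrite /= rmorph0 quat0. Qed.

Lemma ratq_mx_e a : ratq_mx (ratq_e a) = cl_mx R a.
Proof. by rewrite /= !ratr_nat cl_mx_quat. Qed.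

End RationalQuaternions.

(* An element c + \sum_j d_j R_j + t (c' + \sum_j d'_j R_j) of the algebra
   extended by t, with R1, R2 commuted to the right and no part of R-degree two
   or more.  Products are only ever taken with a constant factor, so this
   truncation is exact. *)
Record lin := Lin { lc : ratq; ld : 'I_2 -> ratq; ltc : ratq; ltd : 'I_2 -> ratq }.

Definition lin_eqb (X Y : lin) : bool :=
  let agree f g := (f ord0 == g ord0) && (f ord_max == g ord_max) in
  [&& lc X == lc Y, agree (ld X) (ld Y), ltc X == ltc Y & agree (ltd X) (ltd Y)].

Definition lcst (a : ratq * ratq) : lin := Lin a.1 (fun _ => ratq0) a.2 (fun _ => ratq0).
Definition lR (j : 'I_2) : lin :=
  Lin ratq0 (fun j' => if j' == j then ratq_e ord0 else ratq0) ratq0 (fun _ => ratq0).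

Definition ladd (X Y : lin) : lin :=
  Lin (ratq_add (lc X) (lc Y)) (fun j => ratq_add (ld X j) (ld Y j))
      (ratq_add (ltc X) (ltc Y)) (fun j => ratq_add (ltd X j) (ltd Y j)).
Definition lscale (r : rat) (X : lin) : lin :=
  Lin (ratq_scale r (lc X)) (fun j => ratq_scale r (ld X j))
      (ratq_scale r (ltc X)) (fun j => ratq_scale r (ltd X j)).
Definition lmulr (X : lin) (a : ratq * ratq) : lin :=
  Lin (ratq_mul (lc X) a.1) (fun j => ratq_mul (ld X j) a.1)
      (ratq_add (ratq_mul (lc X) a.2) (ratq_mul (ltc X) a.1))
      (fun j => ratq_add (ratq_mul (ld X j) a.2) (ratq_mul (ltd X j) a.1)).
Definition lmull (a : ratq * ratq) (X : lin) : lin :=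
  Lin (ratq_mul a.1 (lc X)) (fun j => ratq_mul a.1 (ld X j))
      (ratq_add (ratq_mul a.1 (ltc X)) (ratq_mul a.2 (lc X)))
      (fun j => ratq_add (ratq_mul a.1 (ltd X j)) (ratq_mul a.2 (ld X j))).

Definition cinv (a : ratq * ratq) : ratq * ratq := (ratq_scale (-1) a.1, ratq_scale (-1) a.2).

Definition lpart (i : bool) (Q : ratq * ratq) (X : lin) : lin :=
  lscale (1 / 2) (ladd X (lscale (if i then -1 else 1) (lmulr (lmull (cinv Q) X) Q))).
Definition lsplit (Q1 Q2 : ratq * ratq) (A1 A2 : lin) (k : 'I_8) : lin :=
  let Qj := if (k %/ 4 == 0)%N then Q1 else Q2 in
  let Aj := if (k %/ 4 == 0)%N then A1 else A2 in
  lpart (odd k) Q2 (lpart (odd (k %/ 2)) Q1 (lmulr (ladd Aj (lscale (-1) (lcst Qj))) (cinv Qj))).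

Section LinearImages.
Variable R : realFieldType.
Local Notation rmx := (@ratq_mx R).

Definition is_lin_image (x : dual R) (X : lin) : Prop :=
  (forall w, wcoef x.1 w = deg1 (rmx (lc X)) (fun j => rmx (ld X j)) w) /\
  (forall w, wcoef x.2 w = deg1 (rmx (ltc X)) (fun j => rmx (ltd X j)) w).

Lemma is_lin_image_eqb x X Y : lin_eqb X Y -> is_lin_image x X -> is_lin_image x Y.
Proof.
case/and4P=> /eqP EC /andP[/eqP ED0 /eqP ED1] /eqP ETC /andP[/eqP ETD0 /eqP ETD1] [H1 H2].
have ED j : ld X j = ld Y j by move: j; apply: ord2_cases.
have ETD j : ltd X j = ltd Y j by move: j; apply: ord2_cases.
by split=> w; rewrite ?H1 ?H2; apply: eq_deg1 => [|j]; rewrite ?EC ?ETC ?ED ?ETD.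
Qed.

Lemma is_lin_image_add x y X Y :
  is_lin_image x X -> is_lin_image y Y -> is_lin_image (dadd x y) (ladd X Y).
Proof.
move=> [Hx1 Hx2] [Hy1 Hy2]; split=> w /=; rewrite wcoefD ?Hx1 ?Hy1 ?Hx2 ?Hy2 deg1D;
  by apply: eq_deg1 => *; rewrite ratq_mxD.
Qed.

Lemma is_lin_image_scale r x X :
  is_lin_image x X -> is_lin_image (dscale (ratr r) x) (lscale r X).
Proof.
move=> [Hx1 Hx2]; split=> w /=; rewrite wcoefZ ?Hx1 ?Hx2 deg1Z;
  by apply: eq_deg1 => *; rewrite ratq_mxZ.
Qed.

Lemma is_lin_image_cst q a :
  is_lin_image q (lcst a) ->
  (forall w, wcoef q.1 w = deg1 (rmx a.1) (fun _ => 0) w) /\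
  (forall w, wcoef q.2 w = deg1 (rmx a.2) (fun _ => 0) w).
Proof.
by move=> [H1 H2]; split=> w; rewrite ?H1 ?H2; apply: eq_deg1 => [|j]; rewrite ?ratq_mx0.
Qed.

Lemma wcoef_dmul_cstr x q a : is_lin_image q (lcst a) ->
  (forall w, wcoef (dmul x q).1 w = wcoef x.1 w *m rmx a.1) /\
  (forall w, wcoef (dmul x q).2 w = wcoef x.1 w *m rmx a.2 + wcoef x.2 w *m rmx a.1).
Proof.
move=> /is_lin_image_cst [H1 H2]; split=> w /=; first exact: wcoef_mul_constr.
by rewrite wcoefD !(wcoef_mul_constr H1) !(wcoef_mul_constr H2).
Qed.

Lemma wcoef_dmul_cstl x q a : is_lin_image q (lcst a) ->
  (forall w, wcoef (dmul q x).1 w = rmx a.1 *m wcoef x.1 w) /\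
  (forall w, wcoef (dmul q x).2 w = rmx a.1 *m wcoef x.2 w + rmx a.2 *m wcoef x.1 w).
Proof.
move=> /is_lin_image_cst [H1 H2]; split=> w /=; first exact: wcoef_mul_constl.
by rewrite wcoefD !(wcoef_mul_constl H1) !(wcoef_mul_constl H2).
Qed.

Lemma is_lin_image_mulr x q X a : is_lin_image x X -> is_lin_image q (lcst a) ->
  is_lin_image (dmul x q) (lmulr X a).
Proof.
move=> [Hx1 Hx2] /(@wcoef_dmul_cstr x _ _) [H1 H2]; split=> w; rewrite ?H1 ?H2 ?Hx1 ?Hx2.
  by case: w => [|j [|? ?]] /=; rewrite ?ratq_mxM ?mul0mx.
by case: w => [|j [|? ?]] /=; rewrite ?ratq_mxD ?ratq_mxM ?mul0mx ?addr0.
Qed.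

Lemma is_lin_image_mull x q X a : is_lin_image x X -> is_lin_image q (lcst a) ->
  is_lin_image (dmul q x) (lmull a X).
Proof.
move=> [Hx1 Hx2] /(@wcoef_dmul_cstl x _ _) [H1 H2]; split=> w; rewrite ?H1 ?H2 ?Hx1 ?Hx2.
  by case: w => [|j [|? ?]] /=; rewrite ?ratq_mxM ?mulmx0.
by case: w => [|j [|? ?]] /=; rewrite ?ratq_mxD ?ratq_mxM ?mulmx0 ?addr0.
Qed.

Lemma is_lin_image_dinvQ q a :
  is_lin_image q (lcst a) -> is_lin_image (dinvQ q) (lcst (cinv a)).
Proof.
move=> Hq; apply: is_lin_image_eqb (_ : lin_eqb (lscale (-1) (lcst a)) _) _.
  by rewrite /lin_eqb /= !mulr0 !eqxx.
by rewrite /dinvQ /dopp -(rmorphN1 (@ratr R)); apply: is_lin_image_scale.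
Qed.

Lemma is_lin_image_acl a : is_lin_image (demb (acl R a)) (lcst (ratq_e a, ratq0)).
Proof.
split=> w; cbn [fst snd demb lcst lc ld ltc ltd];
  last by rewrite wcoef0 ratq_mx0; case: w => [|? [|? ?]].
by rewrite wcoef_acl ratq_mx_e; apply: eq_deg1 => // j; rewrite ratq_mx0.
Qed.

Lemma is_lin_image_aR j : is_lin_image (demb (aR R j)) (lR j).
Proof.
split=> w; cbn [fst snd demb lR lc ld ltc ltd];
  last by rewrite wcoef0 ratq_mx0; case: w => [|? [|? ?]].
rewrite wcoef_aR; apply: eq_deg1 => [|j']; first by rewrite ratq_mx0.
by case: (j' == j); rewrite ?ratq_mx_e ?cl_mx0 ?ratq_mx0 ?scale1r ?scale0r.
Qed.

Definition t_unit : ratq * ratq := (ratq0, ratq_e ord0).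

Lemma is_lin_image_dt : is_lin_image (dt R) (lcst t_unit).
Proof.
split=> w; cbn [fst snd dt lcst t_unit lc ld ltc ltd];
  first by rewrite wcoef0 ratq_mx0; case: w => [|? [|? ?]].
by rewrite wcoef_acl ratq_mx_e; apply: eq_deg1 => // j; rewrite ratq_mx0.
Qed.

Lemma is_lin_image_rot1 x1 x2 X1 X2 : is_lin_image x1 X1 -> is_lin_image x2 X2 ->
  is_lin_image (rot1 x1 x2) (ladd X1 (lmull t_unit X2)).
Proof.
by move=> H1 H2; apply: is_lin_image_add H1 (is_lin_image_mull H2 is_lin_image_dt).
Qed.

Lemma is_lin_image_rot2 x1 x2 X1 X2 : is_lin_image x1 X1 -> is_lin_image x2 X2 ->
  is_lin_image (rot2 x1 x2) (ladd X2 (lscale (-1) (lmull t_unit X1))).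
Proof.
move=> H1 H2; rewrite /rot2 /dsub /dopp -(rmorphN1 (@ratr R)).
exact/is_lin_image_add/is_lin_image_scale/is_lin_image_mull/is_lin_image_dt.
Qed.

Lemma is_lin_image_dpart i q x a X : is_lin_image q (lcst a) -> is_lin_image x X ->
  is_lin_image (dpart i q x) (lpart i a X).
Proof.
move=> Hq Hx; rewrite /dpart /lpart.
have -> : (1 / 2 : R) = ratr (1 / 2) by rewrite fmorph_div rmorph1 rmorph_nat.
have -> : (if i then -1 else 1 : R) = ratr (if i then -1 else 1).
  by case: i; rewrite ?rmorphN rmorph1.
apply/is_lin_image_scale/is_lin_image_add => //.
exact/is_lin_image_scale/is_lin_image_mulr/Hq/is_lin_image_mull/(is_lin_image_dinvQ Hq).
Qed.

Lemma is_lin_image_split_var Q1 Q2 A1 A2 a1 a2 X1 X2 k :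
  is_lin_image Q1 (lcst a1) -> is_lin_image Q2 (lcst a2) ->
  is_lin_image A1 X1 -> is_lin_image A2 X2 ->
  is_lin_image (split_var Q1 Q2 A1 A2 k) (lsplit a1 a2 X1 X2 k).
Proof.
move=> HQ1 HQ2 HA1 HA2; rewrite /split_var /lsplit; cbv zeta.
have HQ : is_lin_image (if (k %/ 4 == 0)%N then Q1 else Q2)
                       (lcst (if (k %/ 4 == 0)%N then a1 else a2)) by case: ifP.
have HA : is_lin_image (if (k %/ 4 == 0)%N then A1 else A2)
                       (if (k %/ 4 == 0)%N then X1 else X2) by case: ifP.
apply: is_lin_image_dpart => //; apply: is_lin_image_dpart => //.
apply: is_lin_image_mulr (is_lin_image_dinvQ HQ).
rewrite /dsub /dopp -(rmorphN1 (@ratr R)).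
exact: is_lin_image_add HA (is_lin_image_scale _ HQ).
Qed.

End LinearImages.

Definition ratq_gen (j : 'I_2) : ratq := ratq_e (if j == letter1 then e1 else e2).

(* The images of the split variables, as computed by [is_lin_image_split_base]
   and [is_lin_image_split_rot] below. *)
Definition svar_coef (k : 'I_8) (j : 'I_2) : ratq :=
  if k == (if j == letter1 then 1 else 6)%N :> nat then ratq_scale (-1) (ratq_gen j) else ratq0.

Definition svar_tcoef (k : 'I_8) (j : 'I_2) : ratq :=
  ratq_scale ((k == 6%N :> nat)%:R - (k == 1%N :> nat)%:R)
             (ratq_gen (if j == letter1 then letter2 else letter1)).

Section SplitVariables.
Variable R : realFieldType.

Lemma is_lin_image_bQ1 : is_lin_image (bQ1 R) (lcst (ratq_e e1, ratq0)).
Proof. exact: is_lin_image_acl. Qed.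

Lemma is_lin_image_bQ2 : is_lin_image (bQ2 R) (lcst (ratq_e e2, ratq0)).
Proof. exact: is_lin_image_acl. Qed.

Lemma is_lin_image_rQ1 :
  is_lin_image (rot1 (bQ1 R) (bQ2 R)) (lcst (ratq_e e1, ratq_e e2)).
Proof.
apply: is_lin_image_eqb (is_lin_image_rot1 is_lin_image_bQ1 is_lin_image_bQ2).
by vm_compute.
Qed.

Lemma is_lin_image_rQ2 :
  is_lin_image (rot2 (bQ1 R) (bQ2 R)) (lcst (ratq_e e2, ratq_scale (-1) (ratq_e e1))).
Proof.
apply: is_lin_image_eqb (is_lin_image_rot2 is_lin_image_bQ1 is_lin_image_bQ2).
by vm_compute.
Qed.

Lemma is_lin_image_bA1 : is_lin_image (bA1 R) (ladd (lcst (ratq_e e1, ratq0)) (lR ord0)).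
Proof. exact: is_lin_image_add is_lin_image_bQ1 (is_lin_image_aR _ _). Qed.

Lemma is_lin_image_bA2 : is_lin_image (bA2 R) (ladd (lcst (ratq_e e2, ratq0)) (lR ord_max)).
Proof. exact: is_lin_image_add is_lin_image_bQ2 (is_lin_image_aR _ _). Qed.

Lemma is_lin_image_split_base k :
  is_lin_image (split_var (bQ1 R) (bQ2 R) (bA1 R) (bA2 R) k)
               (Lin ratq0 (svar_coef k) ratq0 (fun _ => ratq0)).
Proof.
apply: is_lin_image_eqb (is_lin_image_split_var k is_lin_image_bQ1
  is_lin_image_bQ2 is_lin_image_bA1 is_lin_image_bA2).
by move: k; apply: ord8_cases; vm_compute.
Qed.

Lemma is_lin_image_split_rot k :
  is_lin_image (split_var (rot1 (bQ1 R) (bQ2 R)) (rot2 (bQ1 R) (bQ2 R))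
                          (rot1 (bA1 R) (bA2 R)) (rot2 (bA1 R) (bA2 R)) k)
               (Lin ratq0 (svar_coef k) ratq0 (svar_tcoef k)).
Proof.
apply: is_lin_image_eqb (is_lin_image_split_var k is_lin_image_rQ1 is_lin_image_rQ2
  (is_lin_image_rot1 is_lin_image_bA1 is_lin_image_bA2)
  (is_lin_image_rot2 is_lin_image_bA1 is_lin_image_bA2)).
by move: k; apply: ord8_cases; vm_compute.
Qed.

End SplitVariables.

Section Evaluation.
Variable R : realFieldType.
Local Notation M4 := 'M[R]_4.
Local Notation rmx := (@ratq_mx R).
Variable tcoef : 'I_8 -> 'I_2 -> ratq.

Fixpoint mono_mx (u : seq 'I_8) (w : seq 'I_2) : M4 :=
  match u, w with
  | [::], [::] => 1%:M
  | k :: u', j :: w' => rmx (svar_coef k j) *m mono_mx u' w'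
  | _, _ => 0
  end.

Fixpoint mono_tmx (u : seq 'I_8) (w : seq 'I_2) : M4 :=
  match u, w with
  | k :: u', j :: w' =>
      rmx (svar_coef k j) *m mono_tmx u' w' + rmx (tcoef k j) *m mono_mx u' w'
  | _, _ => 0
  end.

Lemma mono_mx_size u w : size u != size w -> mono_mx u w = 0.
Proof. by elim: u w => [|k u IH] [|j w] //= Hs; rewrite IH ?mulmx0. Qed.

Lemma mono_tmx_size u w : size u != size w -> mono_tmx u w = 0.
Proof. by elim: u w => [|k u IH] [|j w] //= Hs; rewrite IH ?mono_mx_size ?mulmx0 ?addr0. Qed.

Variable y : 'I_8 -> dual R.
Hypothesis y_image : forall k, is_lin_image (y k) (Lin ratq0 (svar_coef k) ratq0 (tcoef k)).

Lemma wcoef_dprod u w :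
  wcoef (dprod (map y u)).1 w = mono_mx u w /\ wcoef (dprod (map y u)).2 w = mono_tmx u w.
Proof.
elim: u w => [|k u IH] w.
  rewrite /= /done /demb /= wcoef_acl wcoef0 cl_mx0.
  by split; case: w => [|? [|? ?]].
have [H1 H2] := y_image k; rewrite ratq_mx0 in H1 H2.
split; rewrite /= ?wcoefD (wcoef_mul_deg1l _ H1) ?(wcoef_mul_deg1l _ H2).
  by case: w => [|j w] //=; rewrite (IH w).1.
by case: w => [|j w] /=; rewrite ?addr0 // (IH w).1 (IH w).2.
Qed.

Definition series_mx (f : series R) (N : nat) (w : seq 'I_2) : M4 :=
  \sum_(u : N.-tuple 'I_8) f u *: mono_mx u w.
Definition series_tmx (f : series R) (N : nat) (w : seq 'I_2) : M4 :=
  \sum_(u : N.-tuple 'I_8) f u *: mono_tmx u w.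

Lemma sum_tuples_size (F : seq 'I_8 -> M4) (w : seq 'I_2) :
  (forall u, size u != size w -> F u = 0) ->
  \sum_(k < (size w).+1) \sum_(u : k.-tuple 'I_8) F u = \sum_(u : (size w).-tuple 'I_8) F u.
Proof.
move=> F0; rewrite big_ord_recr /= big1 ?add0r // => k _.
by rewrite big1 // => u _; apply: F0; rewrite size_tuple neq_ltn ltn_ord.
Qed.

Lemma wcoef_series (f : series R) (g : seq 'I_8 -> alg R) w :
  wcoef (fun w b => \sum_(k < (size w).+1) \sum_(u : k.-tuple 'I_8) f u * g u w b) w =
  \sum_(k < (size w).+1) \sum_(u : k.-tuple 'I_8) f u *: wcoef (g u) w.
Proof.
rewrite /wcoef; under eq_clsum => b _ do rewrite scaler_suml.
rewrite clsum_sum; apply: eq_bigr => k _.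
under eq_clsum => b _ do rewrite scaler_suml.
rewrite clsum_sum; apply: eq_bigr => u _.
by rewrite -clsumZ; apply: eq_clsum => b _; rewrite scalerA.
Qed.

Lemma wcoef_eval f w :
  wcoef (eval f y).1 w = series_mx f (size w) w /\
  wcoef (eval f y).2 w = series_tmx f (size w) w.
Proof.
rewrite /eval /= (wcoef_series f (fun u => (dprod (map y u)).1)).
rewrite (wcoef_series f (fun u => (dprod (map y u)).2)).
split.
  rewrite (@sum_tuples_size (fun u => f u *: wcoef (dprod (map y u)).1 w) w) => [|u Hu].
    by apply: eq_bigr => u _; rewrite (wcoef_dprod u w).1.
  by rewrite (wcoef_dprod u w).1 mono_mx_size ?scaler0.
rewrite (@sum_tuples_size (fun u => f u *: wcoef (dprod (map y u)).2 w) w) => [|u Hu].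
  by apply: eq_bigr => u _; rewrite (wcoef_dprod u w).2.
by rewrite (wcoef_dprod u w).2 mono_tmx_size ?scaler0.
Qed.

End Evaluation.

Arguments mono_mx {R}.
Arguments mono_tmx {R}.
Arguments series_mx {R}.
Arguments series_tmx {R}.

Lemma mono_tmx0 (R : realFieldType) u w : mono_tmx (R := R) (fun _ _ => ratq0) u w = 0.
Proof.
by elim: u w => [|k u IH] [|j w] //; cbn [mono_tmx]; rewrite IH ratq_mx0 mulmx0 mul0mx addr0.
Qed.

(** * Extracting circular-basis coefficients *)

Definition ext_sign (i j : 'I_2) : rat := if (i == letter1) && (j == letter2) then -1 else 1.

(* Q_j times the R_j-coefficient of r_(k+1), resp. of its rotation t-term
   (a multiple of Q1 Q2). *)
Definition svar_scalar (k : 'I_8) (j : 'I_2) : rat :=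
  (k == (if j == letter1 then 1 else 6)%N :> nat)%:R.
Definition svar_tscalar (k : 'I_8) (j : 'I_2) : rat :=
  ((k == 6%N :> nat)%:R - (k == 1%N :> nat)%:R) * (if j == letter1 then 1 else -1).

(* r_2 = tilde r_1 + tilde r_2 and r_7 = tilde r_2 - tilde r_1 *)
Definition tilde_val (k : 'I_8) (i : 'I_2) : rat :=
  if k == 1%N :> nat then 1 else if k == 6%N :> nat then (if i == letter1 then -1 else 1) else 0.

Fixpoint rot_coef (it : seq 'I_2) : int :=
  if it is i :: it' then
    rot_coef it' + (if i == letter1 then - 2 * (-1) ^+ size it' else 0)
  else 0.

Section TildeCoefficients.
Variable R : realFieldType.
Local Notation M4 := 'M[R]_4.
Local Notation rmx := (@ratq_mx R).
Local Notation J := (cl_mx R e3).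

Lemma svar_scalarE k j : rmx (ratq_gen j) *m rmx (svar_coef k j) = ratr (svar_scalar k j) *: 1%:M.
Proof.
rewrite -ratq_mxM -cl_mx0 -ratq_mx_e -ratq_mxZ; congr rmx.
by move: k j; apply: ord8_cases; apply: ord2_cases; vm_compute.
Qed.

Lemma svar_tscalarE k j : rmx (ratq_gen j) *m rmx (svar_tcoef k j) = ratr (svar_tscalar k j) *: J.
Proof.
rewrite -ratq_mxM -ratq_mx_e -ratq_mxZ; congr rmx.
by move: k j; apply: ord8_cases; apply: ord2_cases; vm_compute.
Qed.

Lemma ratq_gen_J j : rmx (ratq_gen j) *m J = - (J *m rmx (ratq_gen j)).
Proof.
rewrite -ratq_mx_e -!ratq_mxM -scaleN1r -(rmorphN1 (@ratr R)) -ratq_mxZ; congr rmx.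
by move: j; apply: ord2_cases; vm_compute.
Qed.

Lemma r_of_tilde_letter k i : r_of_tilde R k (letter8 i) = ratr (tilde_val k i).
Proof.
move: k i; apply: ord8_cases; apply: ord2_cases;
rewrite /r_of_tilde !big_ord_recr big_ord0 /= /r_of_hat /hat_of_tilde /mat8 /tilde_val /=
  ?rmorph0 ?rmorph1 ?rmorphN ?rmorph1; ring.
Qed.

Lemma sum_ext_sign_scalar k i :
  \sum_j ratr (ext_sign i j) * ratr (svar_scalar k j) = r_of_tilde R k (letter8 i).
Proof.
rewrite r_of_tilde_letter -(eq_bigr _ (fun j _ => rmorphM _ _ _)) -rmorph_sum.
by congr ratr; move: k i; apply: ord8_cases; apply: ord2_cases;
  rewrite !big_ord_recr big_ord0; vm_compute.
Qed.

Lemma sum_ext_sign_tscalar k i :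
  \sum_j ratr (ext_sign i j) * ratr (svar_tscalar k j) =
  -2 * (i == letter1)%:R * r_of_tilde R k (letter8 i).
Proof.
rewrite r_of_tilde_letter -(eq_bigr _ (fun j _ => rmorphM _ _ _)) -rmorph_sum.
have -> : -2 * (i == letter1)%:R * ratr (tilde_val k i) =
           ratr (-2 * (i == letter1)%:R * tilde_val k i) :> R.
  by rewrite !rmorphM rmorphN !rmorph_nat.
by congr ratr; move: k i; apply: ord8_cases; apply: ord2_cases;
  rewrite !big_ord_recr big_ord0; vm_compute.
Qed.

(* At the m-th letter, the R-letter j is weighted by [ext_sign i_m j] and
   multiplied on the left by Q_j, which cancels the -Q_j in the image of the
   split variable. *)
Fixpoint extract (it : seq 'I_2) (Z : seq 'I_2 -> M4) : M4 :=
  if it is i :: it' then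
    \sum_j ratr (ext_sign i j) *: extract it' (fun w => rmx (ratq_gen j) *m Z (j :: w))
  else Z [::].

Lemma eq_extract it Z Z' :
  (forall w, size w = size it -> Z w = Z' w) -> extract it Z = extract it Z'.
Proof.
elim: it Z Z' => [|i it IH] Z Z' eqZ /=; first exact: eqZ.
apply: eq_bigr => j _; congr (_ *: _); apply: IH => w Hw; congr (_ *m _).
by apply: eqZ; rewrite /= Hw.
Qed.

Lemma extract_sum it (I : Type) (r : seq I) (P : pred I) (F : I -> seq 'I_2 -> M4) :
  extract it (fun w => \sum_(x <- r | P x) F x w) = \sum_(x <- r | P x) extract it (F x).
Proof.
elim: it F => [|i it IH] F //=.
rewrite exchange_big; apply: eq_bigr => j _; rewrite -scaler_sumr -IH.
by congr (_ *: _); apply: eq_extract => w _; rewrite mulmx_sumr.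
Qed.

Lemma extractZ it c Z : extract it (fun w => c *: Z w) = c *: extract it Z.
Proof.
elim: it Z => [|i it IH] Z //=.
rewrite scaler_sumr; apply: eq_bigr => j _.
rewrite (@eq_extract _ _ (fun w => c *: (rmx (ratq_gen j) *m Z (j :: w)))).
  by rewrite IH !scalerA mulrC.
by move=> w _; rewrite scalemxAr.
Qed.

Lemma extractD it Z Z' : extract it (fun w => Z w + Z' w) = extract it Z + extract it Z'.
Proof.
elim: it Z Z' => [|i it IH] Z Z' //=.
rewrite -big_split; apply: eq_bigr => j _ /=.
rewrite -scalerDr -IH; congr (_ *: _).
by apply: eq_extract => w _; rewrite mulmxDr.
Qed.

Lemma extractN it Z : extract it (fun w => - Z w) = - extract it Z.
Proof. by rewrite -scaleN1r -extractZ; apply: eq_extract => w _; rewrite scaleN1r. Qed.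

Lemma extract0 it : extract it (fun _ => 0) = 0.
Proof.
rewrite -[RHS](scale0r (extract it (fun _ => 0))) -extractZ.
by apply: eq_extract => w _; rewrite scaler0.
Qed.

Lemma extract_mulmxr it Z M : extract it (fun w => Z w *m M) = extract it Z *m M.
Proof.
elim: it Z => [|i it IH] Z //=.
rewrite mulmx_suml; apply: eq_bigr => j _.
rewrite -scalemxAl -IH; congr (_ *: _).
by apply: eq_extract => w _; rewrite mulmxA.
Qed.

Lemma extract_mulJ it Z :
  extract it (fun w => J *m Z w) = (-1) ^+ size it *: (J *m extract it Z).
Proof.
elim: it Z => [|i it IH] Z /=; first by rewrite scale1r.
rewrite mulmx_sumr scaler_sumr; apply: eq_bigr => j _.
transitivity (ratr (ext_sign i j) *:
  extract it (fun w => (-1) *: (J *m (rmx (ratq_gen j) *m Z (j :: w))))).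
  congr (_ *: _); apply: eq_extract => w _.
  by rewrite mulmxA ratq_gen_J mulNmx scaleN1r mulmxA.
by rewrite extractZ IH -scalemxAr !scalerA exprS; congr (_ *: _); ring.
Qed.

Definition tilde_weight (u : seq 'I_8) (it : seq 'I_2) : R :=
  \prod_(j < size (map letter8 it)) r_of_tilde R (nth ord0 u j) (nth ord0 (map letter8 it) j).

Lemma tilde_weight_cons k u i it :
  tilde_weight (k :: u) (i :: it) = r_of_tilde R k (letter8 i) * tilde_weight u it.
Proof. by rewrite /tilde_weight /= big_ord_recl. Qed.

Lemma extract_mono it u :
  extract it (mono_mx u) = if size u == size it then tilde_weight u it *: 1%:M else 0.
Proof.
elim: it u => [|i it IH] [|k u] //=.
- by rewrite /tilde_weight big_ord0 scale1r.
- rewrite big1 // => j _; rewrite (@eq_extract _ _ (fun _ => 0)) ?extract0 ?scaler0 //.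
  by move=> w _; rewrite mulmx0.
transitivity (\sum_j ratr (ext_sign i j) *: (ratr (svar_scalar k j) *: extract it (mono_mx u))).
  apply: eq_bigr => j _; congr (_ *: _); rewrite -extractZ; apply: eq_extract => w _.
  by rewrite mulmxA svar_scalarE -scalemxAl mul1mx.
rewrite IH eqSS; case: (size u == size it); last by rewrite big1 // => j _; rewrite !scaler0.
under eq_bigr do rewrite !scalerA.
by rewrite -scaler_suml -big_distrl /= sum_ext_sign_scalar tilde_weight_cons.
Qed.

Lemma extract_tmono it u :
  extract it (mono_tmx svar_tcoef u) =
  if size u == size it then ((rot_coef it)%:~R * tilde_weight u it) *: J else 0.
Proof.
elim: it u => [|i it IH] [|k u] //=.
- by rewrite mul0r scale0r.
- rewrite big1 // => j _; rewrite (@eq_extract _ _ (fun _ => 0)) ?extract0 ?scaler0 //.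
  by move=> w _; rewrite mulmx0.
transitivity (\sum_j ratr (ext_sign i j) *:
  (ratr (svar_scalar k j) *: extract it (mono_tmx svar_tcoef u) +
   ratr (svar_tscalar k j) *: extract it (fun w => J *m mono_mx u w))).
  apply: eq_bigr => j _; congr (_ *: _); rewrite -!extractZ -extractD.
  apply: eq_extract => w _.
  by rewrite mulmxDr !mulmxA svar_scalarE svar_tscalarE -!scalemxAl mul1mx.
rewrite extract_mulJ IH extract_mono eqSS; case: (size u == size it); last first.
  by rewrite big1 // => j _; rewrite !mulmx0 !scaler0 addr0 scaler0.
rewrite -scalemxAr mulmx1.
under eq_bigr do rewrite scalerDr !scalerA -scalerDl.
rewrite -scaler_suml; congr (_ *: _).
rewrite big_split /= -!big_distrl /= sum_ext_sign_scalar sum_ext_sign_tscalar tilde_weight_cons.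
rewrite rmorphD /=; case: (i == letter1); rewrite /= ?addr0 ?mulr0 ?mul0r; last by ring.
rewrite rmorphM rmorphXn rmorphN1 /=; ring.
Qed.

Lemma extract_series (f : series R) it :
  extract it (series_mx f (size (map letter8 it))) = ptilde f (map letter8 it) *: 1%:M.
Proof.
rewrite /series_mx extract_sum /ptilde scaler_suml; apply: eq_bigr => u _.
rewrite extractZ extract_mono.
have -> : size u == size it by rewrite size_tuple size_map.
rewrite scalerA; congr ((_ * _) *: _).
by apply: eq_bigr => j _; rewrite (tnth_nth ord0).
Qed.

Lemma extract_tseries (f : series R) it :
  extract it (series_tmx svar_tcoef f (size (map letter8 it))) =
  ((rot_coef it)%:~R * ptilde f (map letter8 it)) *: J.
Proof.
rewrite /series_tmx extract_sum /ptilde mulr_sumr scaler_suml; apply: eq_bigr => u _.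
rewrite extractZ extract_tmono.
have -> : size u == size it by rewrite size_tuple size_map.
rewrite scalerA mulrCA; congr ((_ * (_ * _)) *: _).
by apply: eq_bigr => j _; rewrite (tnth_nth ord0).
Qed.

End TildeCoefficients.

(** * The rotation coefficient of a word *)

Definition alternating (w : seq 'I_2) : bool := sorted (fun a b => a != b) w.

Lemma red_alternating w : alternating (red w).
Proof.
elim: w => [|a w IH] //=; rewrite /alternating -/(red w).
case: (red w) IH => [|b t] //= alt_bt.
by case: ifP => [_|/negbT neq_ab] /=; [exact: path_sorted alt_bt | rewrite neq_ab].
Qed.

Lemma rot_coef_red w : rot_coef (red w) = rot_coef w /\ odd (size (red w)) = odd (size w).
Proof.
elim: w => [|a w [IHc IHs]] //=; rewrite -/(red w).
suff [-> ->] : rot_coef (red_step a (red w)) = rot_coef (a :: red w) /\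
               odd (size (red_step a (red w))) = odd (size (a :: red w)).
  by rewrite /= IHc IHs -signr_odd IHs signr_odd.
case: (red w) => [|b t] //=; case: ifP => [/eqP <-|_] //=.
by rewrite negbK exprS; split=> //; case: (a == letter1); ring.
Qed.

(* The letters 1 of an alternating word sit at positions of one parity, so
   they all contribute with the same sign. *)
Lemma rot_coef_alternating a t : alternating (a :: t) ->
  rot_coef (a :: t) = (-1) ^+ (size t + (a != letter1)) * -2 * (count_mem letter1 (a :: t))%:Z.
Proof.
elim: t a => [|b t IH] a; first by move=> _; move: a; apply: ord2_cases.
case/andP=> neq_ab alt_bt.
have -> : rot_coef [:: a, b & t] =
  rot_coef (b :: t) + (if a == letter1 then - 2 * (-1) ^+ (size t).+1 else 0) by [].
rewrite IH //= !exprD ?expr1 exprS.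
by move: a b neq_ab {IH alt_bt}; apply: ord2_cases; apply: ord2_cases => //= _;
  rewrite ?expr0 ?PoszD; ring.
Qed.

Lemma rot_coef_neq0 w : red w \notin [:: [::]; [:: letter2]] -> rot_coef w != 0.
Proof.
rewrite -(rot_coef_red w).1; move: (red_alternating w).
case: (red w) => [|a t] // alt_at notin_at.
rewrite rot_coef_alternating //.
have : (0 < count_mem letter1 (a :: t))%N.
  case: t alt_at notin_at => [|b t]; first by move: a; apply: ord2_cases.
  by case/andP; move: a b; apply: ord2_cases; apply: ord2_cases => //= *; lia.
rewrite -signr_odd; case: (odd _) => /=; lia.
Qed.

Lemma rot_coef_neqN2 w :
  red w \notin [:: [::]; [:: letter2]; [:: letter1]; [:: letter2; letter1]] ->
  rot_coef w != -2.
Proof.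
rewrite -(rot_coef_red w).1; move: (red_alternating w).
case: (red w) => [|a [|b [|c [|d t]]]] //.
- by move: a; apply: ord2_cases.
- by case/andP; move: a b; do 2 apply: ord2_cases.
- by case/and3P; move: a b c; do 3 apply: ord2_cases.
move=> alt_abcdt _; rewrite rot_coef_alternating //.
have : (2 <= count_mem letter1 [:: a, b, c, d & t])%N.
  case/and4P: alt_abcdt; move: a b c d; do 4 apply: ord2_cases; rewrite //= => *; lia.
rewrite -signr_odd; case: (odd _) => /=; lia.
Qed.

(** * Orthogonal invariance *)

Section OrthogonalInvariance.
Variable R : realFieldType.
Local Notation rmx := (@ratq_mx R).
Local Notation J := (cl_mx R e3).
Local Notation rB := (split_var (bQ1 R) (bQ2 R) (bA1 R) (bA2 R)).
Local Notation rT := (split_var (rot1 (bQ1 R) (bQ2 R)) (rot2 (bQ1 R) (bQ2 R))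
                                (rot1 (bA1 R) (bA2 R)) (rot2 (bA1 R) (bA2 R))).
Variable it : seq 'I_2.
Local Notation c := ((rot_coef it)%:~R : R).
Local Notation ext x := (extract it (wcoef x)).

Lemma extract_aeq (x y : alg R) : aeq x y -> ext x = ext y.
Proof. by move=> exy; apply: eq_extract => w _; apply: wcoef_aeq. Qed.

Lemma extract_eval_base f :
  ext (eval f rB).1 = ptilde f (map letter8 it) *: 1%:M /\ ext (eval f rB).2 = 0.
Proof.
have H1 w := (wcoef_eval (is_lin_image_split_base R) f w).1.
have H2 w := (wcoef_eval (is_lin_image_split_base R) f w).2.
split; first by rewrite -extract_series; apply: eq_extract => w Hw; rewrite H1 Hw size_map.
rewrite -(extract0 R it); apply: eq_extract => w _.
by rewrite H2 /series_tmx big1 // => u _; rewrite mono_tmx0 scaler0.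
Qed.

Lemma extract_eval_rot f :
  ext (eval f rT).1 = ptilde f (map letter8 it) *: 1%:M /\
  ext (eval f rT).2 = (c * ptilde f (map letter8 it)) *: J.
Proof.
have H1 w := (wcoef_eval (is_lin_image_split_rot R) f w).1.
have H2 w := (wcoef_eval (is_lin_image_split_rot R) f w).2.
split; first by rewrite -extract_series; apply: eq_extract => w Hw; rewrite H1 Hw size_map.
by rewrite -extract_tseries; apply: eq_extract => w Hw; rewrite H2 Hw size_map.
Qed.

Lemma extract_dmul_cst (x q : dual R) a : is_lin_image q (lcst a) ->
  ext (dmul x q).1 = ext x.1 *m rmx a.1 /\
  ext (dmul x q).2 = ext x.1 *m rmx a.2 + ext x.2 *m rmx a.1.
Proof.
move=> /(@wcoef_dmul_cstr _ x) [H1 H2].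
split; rewrite -!extract_mulmxr -?extractD; by apply: eq_extract => w _; rewrite ?H1 ?H2.
Qed.

Lemma extract_rot1_t (x1 x2 : dual R) : ext (rot1 x1 x2).2 = ext x1.2 + ext x2.1.
Proof.
rewrite -extractD; apply: eq_extract => w _.
rewrite /= wcoefD (wcoef_dmul_cstl _ (is_lin_image_dt R)).2; cbn [fst snd t_unit].
by rewrite ratq_mx0 ratq_mx_e cl_mx0 mul0mx add0r mul1mx.
Qed.

Lemma extract_rot2_t (x1 x2 : dual R) : ext (rot2 x1 x2).2 = ext x2.2 - ext x1.1.
Proof.
rewrite -extractN -extractD; apply: eq_extract => w _.
rewrite /= wcoefD wcoefZ (wcoef_dmul_cstl _ (is_lin_image_dt R)).2; cbn [fst snd t_unit].
by rewrite ratq_mx0 ratq_mx_e cl_mx0 mul0mx add0r mul1mx scaleN1r.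
Qed.

Lemma J_neq0 : J != 0.
Proof.
rewrite cl_mx_quat -quat0 /=; apply/eqP => /quat_inj[_ _ _].
by rewrite ?mulr0n ?mulr1n => /eqP; rewrite oner_eq0.
Qed.

Ltac quat_normal :=
  rewrite ?ratq_mxZ ?ratq_mx0 ?ratq_mx_e ?cl_mx_quat /= ?mulr0n ?mulr1n -?quat1 -?quat0;
  rewrite ?(quatZ, quatM, quatD, quatN, rmorphN1).

Lemma ortho_inv_scalar f : ortho_inv (FQscalar f) -> c * ptilde f (map letter8 it) = 0.
Proof.
move=> Hinv; have [_ /extract_aeq] : deq (eval f rB) (eval f rT) := Hinv.
rewrite (extract_eval_base f).2 (extract_eval_rot f).2 => /esym/eqP.
by rewrite scaler_eq0 (negbTE J_neq0) orbF => /eqP.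
Qed.

Lemma ortho_inv_pseudo f : ortho_inv (FQpseudo f) -> c * ptilde f (map letter8 it) = 0.
Proof.
move=> Hinv.
have [_ /extract_aeq] : deq (dmul (dmul (eval f rB) (bQ1 R)) (bQ2 R))
  (dmul (dmul (eval f rT) (rot1 (bQ1 R) (bQ2 R))) (rot2 (bQ1 R) (bQ2 R))) := Hinv.
rewrite (extract_dmul_cst _ (is_lin_image_bQ2 R)).2 (extract_dmul_cst _ (is_lin_image_bQ1 R)).1.
rewrite (extract_dmul_cst _ (is_lin_image_bQ1 R)).2 (extract_dmul_cst _ (is_lin_image_rQ2 R)).2.
rewrite (extract_dmul_cst _ (is_lin_image_rQ1 R)).1 (extract_dmul_cst _ (is_lin_image_rQ1 R)).2.
rewrite (extract_eval_base f).1 (extract_eval_base f).2.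
rewrite (extract_eval_rot f).1 (extract_eval_rot f).2.
cbn [fst snd]; quat_normal; move=> /quat_inj[scalar_part _ _ _]; lra.
Qed.

Lemma ortho_inv_vector f1 f2 : ortho_inv (FQvector f1 f2) ->
  ptilde f2 (map letter8 it) = (1 + c) * ptilde f1 (map letter8 it) /\
  ptilde f1 (map letter8 it) = (1 + c) * ptilde f2 (map letter8 it).
Proof.
move=> Hinv.
have [[_ /extract_aeq H1] [_ /extract_aeq H2]] :
  deq (rot1 (dmul (eval f1 rB) (bQ1 R)) (dmul (eval f2 rB) (bQ2 R)))
      (dmul (eval f1 rT) (rot1 (bQ1 R) (bQ2 R))) /\
  deq (rot2 (dmul (eval f1 rB) (bQ1 R)) (dmul (eval f2 rB) (bQ2 R)))
      (dmul (eval f2 rT) (rot2 (bQ1 R) (bQ2 R))) := Hinv.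
move: H1 H2; rewrite extract_rot1_t extract_rot2_t.
rewrite (extract_dmul_cst _ (is_lin_image_bQ1 R)).1 (extract_dmul_cst _ (is_lin_image_bQ1 R)).2.
rewrite (extract_dmul_cst _ (is_lin_image_bQ2 R)).1 (extract_dmul_cst _ (is_lin_image_bQ2 R)).2.
rewrite (extract_dmul_cst _ (is_lin_image_rQ1 R)).2 (extract_dmul_cst _ (is_lin_image_rQ2 R)).2.
rewrite !(extract_eval_base f1).1 !(extract_eval_base f1).2.
rewrite !(extract_eval_base f2).1 !(extract_eval_base f2).2.
rewrite (extract_eval_rot f1).1 (extract_eval_rot f1).2.
rewrite (extract_eval_rot f2).1 (extract_eval_rot f2).2.
cbn [fst snd]; quat_normal.
move=> /quat_inj[_ _ Q2_part _] /quat_inj[_ Q1_part _ _]; split; lra.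
Qed.

Section NonzeroRotationCoefficient.
Hypothesis c_neq0 : rot_coef it != 0.

Let cR_neq0 : c != 0. Proof. by rewrite intr_eq0. Qed.

Lemma ptilde_scalar_eq0 (f : series R) : ortho_inv (FQscalar f) -> ptilde f (map letter8 it) = 0.
Proof. by move/ortho_inv_scalar/eqP; rewrite mulf_eq0 (negbTE cR_neq0) => /eqP. Qed.

Lemma ptilde_pseudo_eq0 (f : series R) : ortho_inv (FQpseudo f) -> ptilde f (map letter8 it) = 0.
Proof. by move/ortho_inv_pseudo/eqP; rewrite mulf_eq0 (negbTE cR_neq0) => /eqP. Qed.

Lemma ptilde_vector_eq0 (f1 f2 : series R) : rot_coef it != -2 -> ortho_inv (FQvector f1 f2) ->
  ptilde f1 (map letter8 it) = 0 /\ ptilde f2 (map letter8 it) = 0.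
Proof.
move=> c_neqN2 /ortho_inv_vector[E2 E1].
have c2_neq0 : c + 2 != 0.
  have -> : c + 2 = (rot_coef it + 2)%:~R by rewrite intrD.
  by rewrite intr_eq0; apply/eqP; move/eqP: c_neqN2; lia.
set g1 := ptilde f1 _ in E1 E2 *; set g2 := ptilde f2 _ in E1 E2 *.
have g1_eq0 : g1 = 0.
  have : c * (c + 2) * g1 = (1 + c) * ((1 + c) * g1) - g1 by ring.
  rewrite -E2 -E1 subrr => /eqP.
  by rewrite mulf_eq0 (negbTE (mulf_neq0 cR_neq0 c2_neq0)) => /eqP.
by rewrite E2 g1_eq0 mulr0.
Qed.

End NonzeroRotationCoefficient.

End OrthogonalInvariance.

Theorem mainTheorem2 (R : realFieldType) (op : FQop R) (s : FQidx)
    (f : series R) (iota : seq 'I_2) :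
  ortho_inv op ->
  component op s = Some f ->
  red iota \notin [:: [::]; [:: letter2]] ->
  (s = I0 \/ s = I12 \/ red iota \notin [:: [:: letter1]; [:: letter2; letter1]]) ->
  ptilde f (map letter8 iota) = 0.
Proof.
move=> Hinv Hf red_ne Hs; have c_neq0 := rot_coef_neq0 red_ne.
case: op Hinv Hf => [f0|f1 f2|f0] Hinv Hf.
- by case: s Hs Hf => // _ [<-]; apply: ptilde_scalar_eq0.
- have c_neqN2 : rot_coef iota != -2.
    apply: rot_coef_neqN2; move: red_ne.
    have : red iota \notin [:: [:: letter1]; [:: letter2; letter1]].
      by case: s Hs Hf => [|||] // [|[|]].
    by rewrite !inE; do 4 case: (_ == _).
  have [g1_eq0 g2_eq0] := ptilde_vector_eq0 c_neq0 c_neqN2 Hinv.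
  by case: s Hs Hf => // _ [<-].
- by case: s Hs Hf => // _ [<-]; apply: ptilde_pseudo_eq0.
Qed.
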